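(* Let $\rho>0$, $\alpha>0$, $\beta>0$, let $P=(p_1,\dots,p_n)$ be a path and $Q=(q_1,\dots,q_m)$ a walk in $G$, and let $\pi:[n']\to[n]$ be the index map of the $\beta$-compression of $P$, with the conventions $\pi(0)=0$ and $\pi(n'+1)=n+1$. For every $i\in[n']$ and $j\in[m]$, if $M^\beta_\rho[\pi(i),j]=-1$, then $M^\beta_\rho[x,j]\neq 1$ (i.e. $M^\beta_\rho[x,j]\le 0$) for all integers $x$ with $\pi(i-1)<x<\pi(i+1)$.
   Context: $G$ is a planar graph with positive integer edge weights and shortest-path distance $d$. $\tilde d$ is any function (''perceived distance'', e.g. given by a $(1+\alpha)$-stretch distance oracle) with $d(u,v)\le\tilde d(u,v)\le(1+\alpha)d(u,v)$ for all vertices $u,v$. The approximate free-space matrix $M^\beta_\rho$ is the $n\times m$ matrix with $M^\beta_\rho[i,j]=-1$ if $\tilde d(p_i,q_j)\le(1+\alpha)\rho$, $M^\beta_\rho[i,j]=1$ if $\tilde d(p_i,q_j)>(1+\alpha)(1+\alpha+\beta)\rho$, and $0$ otherwise. The length of $P[p_s,p_t]$ ($s\le t$) is the total weight of the edges of $P$ between positions $s$ and $t$. $\beta$-compression: let $S=\{1\}$ and anchor $c=1$; scanning $x=c+1,c+2,\dots$, the first $x$ with length of $P[p_c,p_x]\ge\beta\rho$ is added to $S$ and becomes the new anchor, and scanning continues; then for each $s\in S$ with $s>1$ also add $s-1$; finally add $n$. Let $n'$ be the size of the resulting index set and $\pi:[n']\to[n]$ its increasing enumeration; $P^\beta=(p_{\pi(1)},\dots,p_{\pi(n')})$.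 *)

From mathcomp Require Import all_boot all_order all_algebra.
Set Implicit Arguments. Unset Strict Implicit. Unset Printing Implicit Defensive.
Import Order.TTheory GRing.Theory Num.Theory.
Local Open Scope ring_scope.

Section Defs.
Variable V : finType.

Definition weighted_graph (e : rel V) (w : V -> V -> nat) : Prop :=
  [/\ symmetric e, irreflexive e,
      (forall u v, e u v -> (0 < w u v)%N) &
      (forall u v, e u v -> w u v = w v u)].

Definition is_walk (e : rel V) (s : seq V) : bool :=
  if s is x :: s' then path e x s' else true.
Definition is_path (e : rel V) (s : seq V) : bool := is_walk e s && uniq s.

Definition walk_weight (w : V -> V -> nat) (u : V) (s : seq V) : nat :=
  sumn (pairmap w u s).

Definition is_sp_dist (e : rel V) (w : V -> V -> nat) (d : V -> V -> nat) : Prop :=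
  forall u v,
    (exists s, [/\ path e u s, last u s = v & walk_weight w u s = d u v]) /\
    (forall s, path e u s -> last u s = v -> (d u v <= walk_weight w u s)%N).

Variable R : realFieldType.

(* 1-based indexing of a sequence: pt v0 P i = p_i (v0 an irrelevant default). *)
Definition pt (v0 : V) (P : seq V) (i : nat) : V := nth v0 P i.-1.

Definition plen (w : V -> V -> nat) (v0 : V) (P : seq V) (s t : nat) : R :=
  \sum_(s <= k < t) ((w (pt v0 P k) (pt v0 P k.+1))%:R : R).

Section Compression.
Variables (w : V -> V -> nat) (v0 : V) (P : seq V) (beta rho : R).
Let n := size P.

Definition next_anchor (c : nat) : option nat :=
  ohead [seq x <- iota c.+1 (n - c) | beta * rho <= plen w v0 P c x].

Fixpoint anchors_from (fuel c : nat) : seq nat :=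
  if fuel is fuel'.+1 then
    if next_anchor c is Some x then x :: anchors_from fuel' x else [::]
  else [::].

Definition anchors : seq nat := 1%N :: anchors_from n 1.

Definition kept (x : nat) : bool :=
  [|| x \in anchors, ((x.+1 \in anchors) && (0 < x)%N) | x == n].

Definition comp_idx : seq nat := [seq x <- iota 1 n | kept x].

Definition comp_size : nat := size comp_idx.

Definition comp_pi (i : nat) : nat :=
  if i == 0%N then 0%N
  else if (i <= comp_size)%N then nth 0%N comp_idx i.-1
  else n.+1.
End Compression.

Definition Mentry (dt : V -> V -> R) (alpha beta rho : R) (u v : V) : int :=
  if dt u v <= (1 + alpha) * rho then (-1)%R
  else if (1 + alpha) * (1 + alpha + beta) * rho < dt u v then 1%R
  else 0%R.

Definition Mmat (dt : V -> V -> R) (alpha beta rho : R) (v0 : V)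
    (P Q : seq V) (i j : nat) : int :=
  Mentry dt alpha beta rho (pt v0 P i) (pt v0 Q j).

End Defs.

(* Let p = pi(i).  Every anchor y with min(x,p) < y <= max(x,p) would force y
   (if p < x) or y - 1 (if x < p) into the compression strictly between two
   consecutive kept indices; so the stretch of P from min(x,p) to max(x,p) is
   covered by the scan from a single anchor without reaching length beta*rho.
   Hence d(p_x, p_p) < beta*rho, and d(p_p, q_j) <= (1+alpha)*rho by the -1
   entry, so the triangle inequality gives
   dt(p_x, q_j) <= (1+alpha)(1+alpha+beta)*rho, i.e. the entry is not 1. *)

From Pilot Require Import Defs.
From mathcomp Require Import all_boot all_order all_algebra.
From mathcomp Require Import zify lra.
Import Order.TTheory GRing.Theory Num.Theory.
Set Implicit Arguments. Unset Strict Implicit.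

Lemma walk_weight_cat (V : finType) (w : V -> V -> nat) u s1 s2 :
  walk_weight w u (s1 ++ s2) = walk_weight w u s1 + walk_weight w (last u s1) s2.
Proof. by rewrite /walk_weight pairmap_cat sumn_cat. Qed.

Section ShortestPathDistance.
Variables (V : finType) (e : rel V) (w : V -> V -> nat) (d : V -> V -> nat).
Hypotheses (e_sym : symmetric e) (w_sym : forall u v, e u v -> w u v = w v u).
Hypothesis d_sp : is_sp_dist e w d.

Lemma path_rev_weight s u : path e u s ->
  exists t, [/\ path e (last u s) t, last (last u s) t = u &
                walk_weight w (last u s) t = walk_weight w u s].
Proof.
elim: s u => [|y s IH] u /=; first by exists [::].
case/andP=> euy /IH [t [pt lt wt]].
exists (rcons t u); rewrite rcons_path pt lt last_rcons e_sym euy; split=> //.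
by rewrite -cats1 walk_weight_cat wt lt /walk_weight /= addn0 (w_sym euy) addnC.
Qed.

Lemma sp_dist_le_walk u s : path e u s -> d u (last u s) <= walk_weight w u s.
Proof. by move=> pus; have [_] := d_sp u (last u s); apply. Qed.

Lemma sp_dist_triangle u m v : d u v <= d u m + d m v.
Proof.
have [[s1 [p1 l1 <-]] _] := d_sp u m; have [[s2 [p2 l2 <-]] _] := d_sp m v.
have := @sp_dist_le_walk u (s1 ++ s2).
by rewrite cat_path p1 l1 p2 last_cat l1 l2 walk_weight_cat l1; apply.
Qed.

Lemma sp_dist_sym u v : d u v = d v u.
Proof.
suff le_d a b : d a b <= d b a by apply/eqP; rewrite eqn_leq !le_d.
have [[s [p l <-]] _] := d_sp b a.
have [t [pt lt <-]] := path_rev_weight p.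
by rewrite l in pt lt *; rewrite -{1}lt; apply: sp_dist_le_walk.
Qed.
End ShortestPathDistance.

Section WalkSegments.
Variables (V : finType) (e : rel V) (w : V -> V -> nat) (v0 : V) (P : seq V).
Hypothesis P_walk : is_walk e P.

Lemma walk_pt_edge k : 0 < k < size P -> e (pt v0 P k) (pt v0 P k.+1).
Proof.
case: P P_walk => [|p0 P'] /=; first by rewrite ltn0 andbF.
move=> /(pathP v0) P'_path; case: k => [|k] //= kn.
exact: P'_path.
Qed.

Lemma walk_segment a m : 0 < a -> a + m <= size P ->
  exists s, [/\ path e (pt v0 P a) s, last (pt v0 P a) s = pt v0 P (a + m) &
    walk_weight w (pt v0 P a) s = \sum_(a <= k < a + m) w (pt v0 P k) (pt v0 P k.+1)].
Proof.
move=> a0; elim: m => [|m IH] am; first by exists [::]; rewrite addn0 big_geq.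
have [s [ps ls ws]] := IH (ltac:(lia)).
exists (rcons s (pt v0 P (a + m).+1)).
rewrite rcons_path ps ls last_rcons addnS walk_pt_edge; last by lia.
split=> //; rewrite -cats1 walk_weight_cat ws ls big_nat_recr /=; last by lia.
by rewrite /walk_weight /= addn0.
Qed.

Variables (R : realFieldType) (d : V -> V -> nat).
Hypothesis d_sp : is_sp_dist e w d.

Lemma sp_dist_le_plen a b : 0 < a -> a <= b <= size P ->
  ((d (pt v0 P a) (pt v0 P b))%:R <= plen R w v0 P a b)%R.
Proof.
move=> a0 /andP[ab bn]; have [s [ps ls ws]] := @walk_segment a (b - a) a0 (ltac:(lia)).
rewrite subnKC // in ls ws.
by rewrite /plen -natr_sum ler_nat -ws -ls (sp_dist_le_walk d_sp ps).
Qed.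
End WalkSegments.

Lemma ohead_filter_iotaP (p : pred nat) m k :
  match ohead [seq x <- iota m k | p x] with
  | Some y => [/\ m <= y < m + k, p y & forall z, m <= z < y -> ~~ p z]
  | None => forall z, m <= z < m + k -> ~~ p z
  end.
Proof.
elim: k m => [|k IH] m /=; first by move=> z; lia.
case: ifP => pm /=; first by split=> //; [lia | move=> z; lia].
have := IH m.+1; case: (ohead _) => [y [y_in py y_min]|none].
  split=> //; first lia.
  by move=> z z_in; have [->|] := eqVneq z m; [rewrite pm | move=> ?; apply: y_min; lia].
by move=> z z_in; have [->|] := eqVneq z m; [rewrite pm | move=> ?; apply: none; lia].
Qed.

Section Compression.
Variables (V : finType) (R : realFieldType) (w : V -> V -> nat) (v0 : V) (P : seq V)
  (beta rho : R).
Local Notation n := (size P).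
Local Notation plen := (plen R w v0 P).
Local Notation next_anchor := (next_anchor w v0 P beta rho).
Local Notation anchors_from := (anchors_from w v0 P beta rho).
Local Notation anchors := (anchors w v0 P beta rho).
Local Notation kept := (kept w v0 P beta rho).
Local Notation K := (comp_idx w v0 P beta rho).
Local Notation pi := (comp_pi w v0 P beta rho).
Local Notation n' := (comp_size w v0 P beta rho).

Lemma plen_ge0 a b : (0 <= plen a b)%R.
Proof. by apply: sumr_ge0 => k _; apply: ler0n. Qed.

Lemma plen_split a m b : a <= m <= b -> (plen a b = plen a m + plen m b)%R.
Proof. by move=> /andP[am mb]; rewrite /plen (big_cat_nat am mb). Qed.

Lemma next_anchorP c :
  match next_anchor c with
  | Some y => [/\ c < y <= n, (beta * rho <= plen c y)%R &
                  forall z, c < z < y -> (plen c z < beta * rho)%R]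
  | None => forall z, c < z <= n -> (plen c z < beta * rho)%R
  end.
Proof.
have := ohead_filter_iotaP (fun x => beta * rho <= plen c x)%R c.+1 (n - c).
rewrite /Defs.next_anchor; case: ohead => [y [y_in y_ge y_min]|none].
  split=> //; first lia.
  by move=> z z_in; rewrite ltNge y_min //; lia.
by move=> z z_in; rewrite ltNge none //; lia.
Qed.

Lemma anchor_below_gap fuel c a b : n <= c + fuel -> c <= a <= b -> b <= n ->
  (forall y, y \in c :: anchors_from fuel c -> ~~ (a < y <= b)) ->
  exists2 cc, cc <= a & forall y, cc < y <= b -> (plen cc y < beta * rho)%R.
Proof.
elim: fuel c => [|f IH] c n_le /andP[ca ab] bn no_anchor.
  by exists c => // y; lia.
have := next_anchorP c; move: no_anchor => /=.
case: (next_anchor c) => [c' | ] no_anchor; last first.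
  by move=> below; exists c => // y y_in; apply: below; lia.
move=> [c'_in _ c'_min].
have [a_lt_c'|c'_le_a] := ltnP a c'.
  exists c => // y y_in; apply: c'_min.
  have := no_anchor c'; rewrite !inE eqxx orbT => /(_ isT); lia.
apply: (IH c'); [lia | by rewrite c'_le_a | by [] |].
by move=> y y_in; apply: no_anchor; rewrite inE y_in orbT.
Qed.

Lemma plen_lt_anchor_free a b : (0 < beta * rho)%R -> 0 < a -> a <= b <= n ->
  (forall y, y \in anchors -> ~~ (a < y <= b)) -> (plen a b < beta * rho)%R.
Proof.
move=> br_gt0 a0 /andP[ab bn] no_anchor.
have [cc cc_le cc_below] := @anchor_below_gap n 1 a b (leq_addl _ _)
  (ltac:(lia)) bn no_anchor.
have [cc_lt_b|b_le_cc] := ltnP cc b; last first.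
  have -> : a = b by lia.
  by rewrite /plen big_geq.
have := cc_below b; rewrite cc_lt_b leqnn => /(_ isT).
rewrite (@plen_split cc a b) ?cc_le //; have := plen_ge0 cc a; lra.
Qed.

Lemma mem_comp_idx k : (k \in K) = kept k && (0 < k <= n).
Proof. by rewrite mem_filter mem_iota add1n ltnS. Qed.

Lemma comp_idx_sorted : sorted ltn K.
Proof. apply: sorted_filter; [exact: ltn_trans | exact: iota_ltn_sorted]. Qed.

Lemma comp_piE i : 0 < i <= n' -> pi i = nth 0 K i.-1.
Proof. by rewrite /comp_pi; case: i => // i /andP[_ ->]. Qed.

Lemma comp_pi_mem i : 0 < i <= n' -> pi i \in K.
Proof. by case: i => // i i_in; rewrite comp_piE // mem_nth //; case/andP: i_in. Qed.

Lemma comp_pi_bound i : 0 < i <= n' -> 0 < pi i <= n.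
Proof. by move/comp_pi_mem; rewrite mem_comp_idx => /andP[]. Qed.

Lemma comp_pi0 : pi 0 = 0.
Proof. by []. Qed.

Lemma comp_pi_out i : n' < i -> pi i = n.+1.
Proof. by case: i => // i i_gt; rewrite /comp_pi leqNgt i_gt. Qed.

Lemma comp_pi_le i : pi i <= n.+1.
Proof.
have [->|i0] := posnP i; first by [].
have [i_le|i_gt] := leqP i n'; last by rewrite comp_pi_out.
by have := @comp_pi_bound i; lia.
Qed.

Lemma comp_pi_lt i1 i2 : i1 < i2 <= n'.+1 -> pi i1 < pi i2.
Proof.
move=> i12; have [->|i1_gt0] := posnP i1.
  rewrite comp_pi0; have [i2_le|i2_gt] := leqP i2 n'; last by rewrite comp_pi_out.
  by have := @comp_pi_bound i2; lia.
have i1_in : 0 < i1 <= n' by lia.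
have [i2_le|i2_gt] := leqP i2 n'; last first.
  by rewrite (comp_pi_out i2_gt); have := comp_pi_bound i1_in; lia.
case: i1 i1_gt0 i12 i1_in => // i1 _ i12 i1_in; case: i2 i12 i2_le => // i2 i12 i2_le.
rewrite !comp_piE //; apply: (sorted_ltn_nth ltn_trans); first exact: comp_idx_sorted.
all: by rewrite ?inE /comp_size in i12 i2_le *; lia.
Qed.

Lemma comp_idx_pi k : k \in K -> exists2 t, 0 < t <= n' & pi t = k.
Proof.
move=> kK; have k_idx : index k K < n' by rewrite index_mem.
by exists (index k K).+1; [lia | rewrite comp_piE ?nth_index //; lia].
Qed.

Lemma comp_idx_gap i k : i <= n' -> k \in K -> ~~ (pi i < k < pi i.+1).
Proof.
move=> i_le /comp_idx_pi [t t_in <-]; apply/negP => /andP[lt1 lt2].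
have [t_le|t_gt] := leqP t i.
  rewrite leq_eqVlt in t_le; case/orP: t_le => [/eqP t_eq | t_lt].
    by rewrite t_eq ltnn in lt1.
  by have := @comp_pi_lt t i; lia.
rewrite leq_eqVlt in t_gt; case/orP: t_gt => [/eqP t_eq | t_gt].
  by rewrite -t_eq ltnn in lt2.
by have := @comp_pi_lt i.+1 t; lia.
Qed.

Lemma no_anchor_near_comp_pi i x y : 0 < i <= n' ->
  pi i.-1 < x < pi i.+1 -> y \in anchors -> ~~ (minn x (pi i) < y <= maxn x (pi i)).
Proof.
move=> i_in x_in y_anchor; apply/negP => /andP[y_gt y_le].
have pi_in := comp_pi_bound i_in; have := comp_pi_le i.+1.
have [p_le_x|x_lt_p] := leqP (pi i) x => pi_next_le.
  have := @comp_idx_gap i y (ltac:(lia)).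
  by rewrite mem_comp_idx /kept y_anchor /= => /(_ (ltac:(lia)))/negP; apply; lia.
case: y y_anchor y_gt y_le => [|y] y_anchor y_gt y_le; first by lia.
have := @comp_idx_gap i.-1 y (ltac:(lia)); rewrite prednK; last by lia.
by rewrite mem_comp_idx /kept y_anchor /= => /(_ (ltac:(lia)))/negP; apply; lia.
Qed.
End Compression.

Local Open Scope ring_scope.

Lemma Mentry_eqN1 (V : finType) (R : realFieldType) (dt : V -> V -> R)
    alpha beta rho u v :
  Mentry dt alpha beta rho u v = -1 -> dt u v <= (1 + alpha) * rho.
Proof. by rewrite /Mentry; case: ifP => // _; case: ifP. Qed.

Lemma Mentry_neq1 (V : finType) (R : realFieldType) (dt : V -> V -> R)
    alpha beta rho u v :
  dt u v <= (1 + alpha) * (1 + alpha + beta) * rho -> Mentry dt alpha beta rho u v != 1.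
Proof. by rewrite /Mentry ltNge => ->; case: ifP. Qed.

Lemma sp_dist_comp_pi_lt (V : finType) (R : realFieldType) (e : rel V)
    (w : V -> V -> nat) (d : V -> V -> nat) (beta rho : R) (P : seq V) (v0 : V) i x :
  weighted_graph e w -> is_sp_dist e w d -> is_walk e P -> 0 < beta * rho ->
  (0 < i <= comp_size w v0 P beta rho)%N ->
  (comp_pi w v0 P beta rho i.-1 < x < comp_pi w v0 P beta rho i.+1)%N ->
  (d (pt v0 P x) (pt v0 P (comp_pi w v0 P beta rho i)))%:R < beta * rho.
Proof.
move=> [e_sym _ _ w_sym] d_sp P_walk br_gt0 i_in x_in.
have no_anchor := no_anchor_near_comp_pi i_in x_in.
have pi_in := comp_pi_bound i_in; have := comp_pi_le w v0 P beta rho i.+1.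
set p := comp_pi _ _ _ _ _ i => pi_le.
have d_lt a b : (0 < a)%N -> (a <= b <= size P)%N ->
    (forall y, y \in anchors w v0 P beta rho -> ~~ (a < y <= b)%N) ->
    (d (pt v0 P a) (pt v0 P b))%:R < beta * rho.
  move=> a0 ab no_anchor_ab.
  apply: le_lt_trans (plen_lt_anchor_free br_gt0 a0 ab no_anchor_ab).
  by apply: (sp_dist_le_plen (e := e)).
have [x_le|p_lt] := leqP x p.
  by apply: d_lt; [lia | lia | rewrite -(minn_idPl x_le) -{2}(maxn_idPr x_le)].
rewrite (sp_dist_sym e_sym w_sym d_sp); apply: d_lt; [lia | lia |].
by rewrite -(minn_idPr (ltnW p_lt)) -{2}(maxn_idPl (ltnW p_lt)).
Qed.

Theorem mainTheorem6 (R : realFieldType) (V : finType) (e : rel V)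
    (w : V -> V -> nat) (d : V -> V -> nat) (dt : V -> V -> R)
    (alpha beta rho : R) (P Q : seq V) (v0 : V) :
  weighted_graph e w ->
  is_sp_dist e w d ->
  (forall u v, (d u v)%:R <= dt u v <= (1 + alpha) * (d u v)%:R) ->
  0 < rho -> 0 < alpha -> 0 < beta ->
  is_path e P -> is_walk e Q -> (0 < size P)%N ->
  forall i j : nat,
    (1 <= i <= comp_size w v0 P beta rho)%N ->
    (1 <= j <= size Q)%N ->
    Mmat dt alpha beta rho v0 P Q (comp_pi w v0 P beta rho i) j = -1 ->
    forall x : nat,
      (comp_pi w v0 P beta rho i.-1 < x < comp_pi w v0 P beta rho i.+1)%N ->
      Mmat dt alpha beta rho v0 P Q x j != 1.
Proof.
move=> graph d_sp dt_approx rho_gt0 alpha_gt0 beta_gt0 /andP[P_walk _] _ _ i j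
  i_in _ Mpi_eqN1 x x_in.
have d_xp := sp_dist_comp_pi_lt graph d_sp P_walk (mulr_gt0 beta_gt0 rho_gt0) i_in x_in.
set p := pt v0 P (comp_pi w v0 P beta rho i) in Mpi_eqN1 d_xp *; set q := pt v0 Q j.
have d_pq : (d p q)%:R <= (1 + alpha) * rho.
  by apply: le_trans (Mentry_eqN1 Mpi_eqN1); case/andP: (dt_approx p q).
have d_xq : ((d (pt v0 P x) q)%:R : R) <= (d (pt v0 P x) p)%:R + (d p q)%:R.
  by rewrite -natrD ler_nat (sp_dist_triangle d_sp).
apply: Mentry_neq1; case/andP: (dt_approx (pt v0 P x) q) => _ dt_le.
apply: le_trans dt_le _; rewrite -mulrA; apply: ler_wpM2l; [lra | nra].
Qed.
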